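(* Let $B=T(B_1)/\langle R\rangle$ be a connected graded $\Bbbk$-algebra generated in degree one, with $\dim B_1=3$ and with a three-dimensional space $R\subseteq B_1\otimes B_1$ of quadratic relations, and suppose $B$ is a right $D(S_3)$-module algebra (with $B_1$ a $D(S_3)$-submodule and $R$ a $D(S_3)$-submodule of $B_1\otimes B_1$) such that the action of $D(S_3)$ on $B$ is inner faithful. Then $B$ is not a domain. In particular, no quadratic AS regular algebra with three generators admits an inner faithful $D(S_3)$-action of this kind.
   Context: Let $\Bbbk=\mathbb{C}$ and $S_3=\langle r,s\mid r^3=s^2=e,\ srs^{-1}=r^{-1}\rangle$. The Drinfeld double $D(G)$ of a finite group $G$ has basis $\{\phi_gh\}$, multiplication $(\phi_g h)(\phi_{g'}h')=\delta_{g,hg'h^{-1}}\phi_g hh'$, comultiplication $\Delta(\phi_gh)=\sum_x\phi_xh\otimes\phi_{x^{-1}g}h$, counit $\epsilon(\phi_gh)=\delta_{g,e}$. A right $D(G)$-module algebra is a $G$-graded algebra ($A_xA_y\subseteq A_{xy}$) with a right action of $G$ by algebra automorphisms satisfying $A_x\cdot g\subseteq A_{g^{-1}xg}$, with $\phi_x$ acting as projection onto $A_x$; on $V\otimes W$ the grade of $V_x\otimes W_y$ is $xy$ and $G$ acts diagonally. An action of a Hopf algebra $H$ on a module $V$ is inner faithful if no nonzero Hopf ideal $I$ of $H$ satisfies $VI=0$. A domain is a nonzero algebra without zero divisors. *)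

From HB Require Import structures.
From mathcomp Require Import all_boot all_order all_algebra all_fingroup.
From mathcomp Require Import complex Rstruct.
From Stdlib Require Rdefinitions.

Set Implicit Arguments.
Unset Strict Implicit.
Unset Printing Implicit Defensive.

Import GRing.Theory.
Local Open Scope ring_scope.

Notation CC := (complex Rdefinitions.R).

Notation S3 := {perm 'I_3}.

(* An element u : DS3 is the linear combination sum_(g,h) u(g,h) phi_g h *)
Definition DS3 := {ffun S3 * S3 -> CC}.
(* D(S_3) (x) D(S_3), with u (x) v having coefficient u p * v q at (p,q) *)
Definition DS3_2 := {ffun (S3 * S3) * (S3 * S3) -> CC}.

(* (phi_g h)(phi_g' h') = delta_{g, h g' h^-1} phi_g (h h') *)
Definition dmul (a b : DS3) : DS3 :=
  [ffun p : S3 * S3 => \sum_(q : S3 * S3) \sum_(q' : S3 * S3)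
     if [&& q.1 == (q.2 * q'.1 * invg q.2)%g, q.1 == p.1 & (q.2 * q'.2)%g == p.2]
     then a q * b q' else 0].

(* Delta(phi_g h) = sum_x phi_x h (x) phi_(x^-1 g) h *)
Definition dcomul (u : DS3) : DS3_2 :=
  [ffun pq : (S3 * S3) * (S3 * S3) =>
     if pq.1.2 == pq.2.2 then u ((pq.1.1 * pq.2.1)%g, pq.1.2) else 0].

(* epsilon(phi_g h) = delta_{g,e} *)
Definition dcounit (u : DS3) : CC := \sum_(h : S3) u (1%g, h).

(* antipode S(phi_g h) = h^-1 phi_(g^-1) = phi_(h^-1 g^-1 h) h^-1 *)
Definition dantipode (u : DS3) : DS3 :=
  [ffun p : S3 * S3 => u ((invg p.2 * invg p.1 * p.2)%g, invg p.2)].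

Definition dtens (a b : DS3) : DS3_2 := [ffun pq => a pq.1 * b pq.2].

Definition dsubspace (I : DS3 -> Prop) : Prop :=
  I 0 /\ forall (c : CC) (u v : DS3), I u -> I v -> I (c *: u + v).

Definition hopf_ideal (I : DS3 -> Prop) : Prop :=
  [/\ dsubspace I,
      (forall a u, I u -> I (dmul a u) /\ I (dmul u a)),
      (* coideal: Delta(I) <= I (x) H + H (x) I and epsilon(I) = 0 *)
      (forall u, I u -> exists n (a b : 'I_n -> DS3),
          (forall k, I (a k) \/ I (b k)) /\
          dcomul u = \sum_(k < n) dtens (a k) (b k)),
      (forall u, I u -> dcounit u = 0)
    &
      (forall u, I u -> I (dantipode u))].

(* The tensor algebra T(V), V = B_1 = k^3 with basis x_0, x_1, x_2.    *)
(* An element is a formal linear combination of words in x_0,x_1,x_2. *)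
Definition nc := seq (CC * seq 'I_3).

Definition ncoef (p : nc) (w : seq 'I_3) : CC := \sum_(t <- p | t.2 == w) t.1.
Definition ncone : nc := [:: (1, [::])].
Definition ncscale (c : CC) (p : nc) : nc := [seq (c * t.1, t.2) | t <- p].
Definition ncmul (p q : nc) : nc :=
  [seq (s.1 * t.1, s.2 ++ t.2) | s <- p, t <- q].

(* V (x) V is identified with 3x3 matrices: M <-> sum_(i,j) M i j x_i (x) x_j *)
Definition ofTens (M : 'M[CC]_3) : nc :=
  [seq (M i j, [:: i; j]) | i <- enum 'I_3, j <- enum 'I_3].

(* the relation space R = span of r_0, r_1, r_2 *)
Definition lin_indep3 (r : 'I_3 -> 'M[CC]_3) : Prop :=
  forall c : 'I_3 -> CC, \sum_(k < 3) c k *: r k = 0 -> forall k, c k = 0.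

Definition inR (r : 'I_3 -> 'M[CC]_3) (M : 'M[CC]_3) : Prop :=
  exists c : 'I_3 -> CC, M = \sum_(k < 3) c k *: r k.

(* membership in the two-sided ideal <R> of T(V) *)
Definition in_rel (r : 'I_3 -> 'M[CC]_3) (p : nc) : Prop :=
  exists l : seq (nc * 'M[CC]_3 * nc),
    (forall t, t \in l -> inR r t.1.2) /\
    forall w, ncoef p w =
      ncoef (flatten [seq ncmul (ncmul t.1.1 (ofTens t.1.2)) t.2 | t <- l]) w.

Definition quad_domain (r : 'I_3 -> 'M[CC]_3) : Prop :=
  ~ in_rel r ncone /\
  forall p q, in_rel r (ncmul p q) -> in_rel r p \/ in_rel r q.

(* Right D(S_3)-module structure on V = B_1 (row vectors, right action): *)
(*   v . g     = v *m rho g    (right S_3-action),                      *)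
(*   v . phi_x = v *m P x      (projection onto the component V_x).     *)
Definition DS3_module (rho P : S3 -> 'M[CC]_3) : Prop :=
  [/\ rho 1%g = 1,
      (forall g h, rho (g * h)%g = rho g *m rho h),
      (forall x y, P x *m P y = if x == y then P x else 0),
      \sum_(x : S3) P x = 1
    & (* V_x . g <= V_(g^-1 x g) *)
      forall x g, P x *m rho g *m P (x ^ g)%g = P x *m rho g].

(* R is a D(S_3)-submodule of V (x) V (grading of V_x (x) V_y is xy, *)
(* S_3 acting diagonally). *)
Definition R_submodule (r : 'I_3 -> 'M[CC]_3) (rho P : S3 -> 'M[CC]_3) : Prop :=
  forall M, inR r M ->
    (forall g, inR r ((rho g)^T *m M *m rho g)) /\
    (forall z, inR r (\sum_(x : S3) \sum_(y : S3 | (x * y)%g == z)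
                        (P x)^T *m M *m P y)).

(* Induced action on T(V): on a word x_(i_1)...x_(i_n), apply M_k to the k-th letter *)
Fixpoint opw (Ms : seq 'M[CC]_3) (w : seq 'I_3) : nc :=
  match Ms, w with
  | M :: Ms', i :: w' => [seq (M i j * t.1, j :: t.2) | j <- enum 'I_3, t <- opw Ms' w']
  | _, _ => [:: (1, [::])]
  end.

Fixpoint gseqs (n : nat) : seq (seq S3) :=
  if n is n'.+1 then [seq x :: s | x <- enum S3, s <- gseqs n'] else [:: [::]].

(* diagonal action of g *)
Definition ncact (rho : S3 -> 'M[CC]_3) (g : S3) (p : nc) : nc :=
  flatten [seq ncscale t.1 (opw (nseq (size t.2) (rho g)) t.2) | t <- p].

(* action of phi_z: projection onto the z-graded component *)
Definition ncproj (P : S3 -> 'M[CC]_3) (z : S3) (p : nc) : nc :=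
  flatten [seq ncscale t.1
             (flatten [seq opw (map P ys) t.2 |
                        ys <- gseqs (size t.2) & (\prod_(x <- ys) x)%g == z])
          | t <- p].

(* action of u in D(S_3): p . (phi_g h) = (p . phi_g) . h *)
Definition ncactD (rho P : S3 -> 'M[CC]_3) (p : nc) (u : DS3) : nc :=
  flatten [seq ncscale (u q) (ncact rho q.2 (ncproj P q.1 p)) | q <- enum {: S3 * S3}].

(* the action of D(S_3) on B = T(V)/<R> is inner faithful: no nonzero Hopf *)
(* ideal I annihilates B, i.e. satisfies B . I = 0 (T(V) . I <= <R>).      *)
Definition inner_faithful (r : 'I_3 -> 'M[CC]_3) (rho P : S3 -> 'M[CC]_3) : Prop :=
  forall I : DS3 -> Prop, hopf_ideal I ->
    (forall (p : nc) (u : DS3), I u -> in_rel r (ncactD rho P p u)) ->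
    forall u, I u -> u = 0.

From mathcomp Require Import all_boot all_order all_algebra all_fingroup.
From mathcomp Require Import complex Rstruct.
From mathcomp Require Import ring zify.

(* An inner faithful action cannot annihilate the Hopf ideal spanned by the
   phi_g h with g odd, so some transposition grades V = B_1 nontrivially; as
   conjugation permutes the three transpositions transitively, V is the sum of
   three lines V_t, one for each transposition t.  In an adapted basis
   x_0, x_1, x_2 the tensor x_i (x) x_j has trivial degree when i = j and
   degree one of the two 3-cycles otherwise.  The relation space R is graded,
   and a transposition interchanges its two 3-cycle components, so
   dim R_e + 2 dim R_c = 3.  If R = R_e, then R consists of the diagonal
   tensors and contains x_0 (x) x_0.  Otherwise R is spanned by
   D = sum d_i x_i (x) x_i, F = sum f_i x_i (x) x_(i+1) and
   G = sum g_i x_(i+1) (x) x_i with all coefficients nonzero; the S_3-action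
   forces f_i g_i d_(i-1) to be independent of i, which is exactly what is
   needed for some D + a F + b G to be a rank-one tensor u (x) w, with a a
   cube root of d_0 d_1 d_2 / f_0 f_1 f_2.  In both cases u w = 0 in B with
   u, w nonzero of degree one. *)

Set Implicit Arguments.
Unset Strict Implicit.
Unset Printing Implicit Defensive.
Import GRing.Theory Num.Theory.
Local Open Scope ring_scope.

Lemma mxtrace_pid (R : pzRingType) n r :
  (r <= n)%N -> \tr (pid_mx r : 'M[R]_n) = r%:R.
Proof.
move=> rn; rewrite /mxtrace.
rewrite (eq_bigr (fun i : 'I_n => if (i < r)%N then 1 else 0)); last first.
  by move=> i _; rewrite mxE eqxx /=; case: (i < r)%N.
rewrite -big_mkcond /= -(big_ord_widen n (fun _ => 1) rn).
by rewrite sumr_const card_ord.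
Qed.

Lemma mxtrace_idem (F : fieldType) n (A : 'M[F]_n) :
  A *m A = A -> \tr A = (\rank A)%:R.
Proof.
move=> AA.
have A_def := mulmx_ebase A.
set L := col_ebase A in A_def; set U := row_ebase A in A_def.
set p := pid_mx _ in A_def.
have uL : L \in unitmx by apply: col_ebase_unit.
have uU : U \in unitmx by apply: row_ebase_unit.
have rn : (\rank A <= n)%N by exact: rank_leq_row.
have pp : p *m p = p by rewrite /p pid_mx_id // minnn.
have pULp : p *m (U *m L) *m p = p.
  have : (L *m p *m U) *m (L *m p *m U) = L *m p *m U by rewrite A_def AA.
  move/(congr1 (fun X => invmx L *m X *m invmx U)); rewrite !mulmxA.
  rewrite mulVmx // mul1mx -[_ *m U *m invmx U]mulmxA mulmxV // mulmx1.
  by rewrite -[_ *m U *m invmx U]mulmxA mulmxV // mulmx1.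
rewrite -{1}A_def -mulmxA mxtrace_mulC -mulmxA.
by rewrite -{1}pp -mulmxA mxtrace_mulC pULp mxtrace_pid.
Qed.

(** * Zero divisors of degree one *)

Definition ncvec (u : 'rV[CC]_3) : nc := [seq (u 0 i, [:: i]) | i <- enum 'I_3].

Definition rank_one_relation (r : 'I_3 -> 'M[CC]_3) : Prop :=
  exists u w : 'rV[CC]_3, [/\ u != 0, w != 0 & inR r (u^T *m w)].

Lemma ncmul_ncvec (u w : 'rV[CC]_3) :
  ncmul (ncvec u) (ncvec w) = ofTens (u^T *m w).
Proof.
rewrite /ncmul /ncvec /ofTens allpairs_mapl allpairs_mapr.
apply: eq_allpairs => i j /=; congr (_, _).
by rewrite !mxE big_ord1 !mxE.
Qed.

Lemma ncoef_ncone_mul p w : ncoef (ncmul ncone p) w = ncoef p w.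
Proof.
rewrite /ncmul /ncone /= cats0 /ncoef big_map; apply: eq_bigr => t _ /=.
by rewrite mul1r.
Qed.

Lemma ncmul_ncone p : ncmul p ncone = p.
Proof.
elim: p => [|s p IHp] //=; rewrite /ncmul /= in IHp *.
by rewrite IHp mulr1 cats0; case: s.
Qed.

Lemma ncoef_ncvec u i : ncoef (ncvec u) [:: i] = u 0 i.
Proof.
rewrite /ncoef /ncvec big_map /= big_enum_cond /=.
by rewrite (big_pred1 i) // => j /=; rewrite eqseq_cons andbT.
Qed.

Lemma mem_ncmul p q x : x \in ncmul p q ->
  exists s t, [/\ s \in p, t \in q & x.2 = s.2 ++ t.2].
Proof. by move/allpairsP => [[s t] [Hs Ht ->]]; exists s, t. Qed.

Lemma size_mem_ofTens M x : x \in ofTens M -> size x.2 = 2.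
Proof. by move/allpairsP => [[i j] [_ _ ->]]. Qed.

Lemma ncoef_ideal_deg1 (l : seq (nc * 'M[CC]_3 * nc)) i :
  ncoef (flatten [seq ncmul (ncmul t.1.1 (ofTens t.1.2)) t.2 | t <- l]) [:: i] = 0.
Proof.
rewrite /ncoef; apply: big1_seq => x /andP [/eqP x_i x_in].
suff : (2 <= size x.2)%N by rewrite x_i.
move/flattenP: x_in => [s /mapP [t _ ->] /mem_ncmul [a [b [a_in _ ->]]]].
move/mem_ncmul: a_in => [c [d [_ d_in ->]]].
rewrite !size_cat (size_mem_ofTens d_in); lia.
Qed.

Lemma in_rel_ncvec r u : in_rel r (ncvec u) -> u = 0.
Proof.
move=> [l [_ Hl]]; apply/rowP => i.
by have := Hl [:: i]; rewrite ncoef_ncvec ncoef_ideal_deg1 mxE.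
Qed.

Lemma in_rel_ofTens r M : inR r M -> in_rel r (ofTens M).
Proof.
move=> RM; exists [:: (ncone, M, ncone)]; split.
  by move=> t; rewrite inE => /eqP ->.
by move=> w /=; rewrite cats0 ncmul_ncone ncoef_ncone_mul.
Qed.

Lemma rank_one_relation_not_domain r : rank_one_relation r -> ~ quad_domain r.
Proof.
move=> [u [w [u0 w0 Ruw]]] [_ domain].
have : in_rel r (ncmul (ncvec u) (ncvec w)) by rewrite ncmul_ncvec; apply: in_rel_ofTens.
case/domain => /in_rel_ncvec E; [move: u0 | move: w0]; by rewrite E eqxx.
Qed.

(** * Annihilation by the odd part of D(S_3) *)

Definition nczero (p : nc) : bool := all (fun t => t.1 == 0) p.

Lemma ncoef_nczero p w : nczero p -> ncoef p w = 0.
Proof.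
move/allP => p0; rewrite /ncoef big1_seq // => t /andP [_ t_in].
exact/eqP/p0.
Qed.

Lemma nczero_flatten (s : seq nc) :
  (forall p, p \in s -> nczero p) -> nczero (flatten s).
Proof. by move=> s0; apply/allP => t /flattenP [p /s0 /allP]; apply. Qed.

Lemma nczero_scale0 p : nczero (ncscale 0 p).
Proof. by apply/allP => t /mapP [x _ ->] /=; rewrite mul0r. Qed.

Lemma nczero_scale c p : nczero p -> nczero (ncscale c p).
Proof.
move/allP => p0; apply/allP => t /mapP [x /p0 /eqP x0 ->] /=.
by rewrite x0 mulr0.
Qed.

Lemma nczero_ncact rho g p : nczero p -> nczero (ncact rho g p).
Proof.
move/allP => p0; apply: nczero_flatten => q /mapP [t /p0 /eqP t0 ->].
by rewrite t0 nczero_scale0.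
Qed.

Lemma nczero_opw (Ms : seq 'M[CC]_3) (w : seq 'I_3) :
  size Ms = size w -> 0 \in Ms -> nczero (opw Ms w).
Proof.
elim: Ms w => [|M Ms IHMs] [|i w] //= [size_w].
rewrite inE => Ms0; apply/allP => x /allpairsP [[j t] [_ t_in ->]] /=.
case/orP: Ms0 => [/eqP <-|Ms0]; first by rewrite mxE mul0r.
by move/allP: (IHMs w size_w Ms0) => /(_ t t_in) /eqP ->; rewrite mulr0.
Qed.

Lemma size_gseqs n ys : ys \in gseqs n -> size ys = n.
Proof.
elim: n ys => [|n IHn] ys /=; first by rewrite inE => /eqP ->.
by move/allpairsP => [[x s] [_ s_in ->]] /=; rewrite (IHn _ s_in).
Qed.

Lemma odd_perm_prod (ys : seq S3) :
  odd_perm (\prod_(x <- ys) x)%g -> exists2 y, y \in ys & odd_perm y.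
Proof.
elim: ys => [|y ys IHys]; first by rewrite big_nil odd_perm1.
rewrite big_cons odd_permM; case: (boolP (odd_perm y)) => /= [y_odd _|_ /IHys].
  by exists y; rewrite ?mem_head.
by case=> z z_in z_odd; exists z; rewrite // inE z_in orbT.
Qed.

Lemma nczero_ncproj (P : S3 -> 'M[CC]_3) z p :
  (forall t, odd_perm t -> P t = 0) -> odd_perm z -> nczero (ncproj P z p).
Proof.
move=> P_odd z_odd; apply: nczero_flatten => q /mapP [t _ ->]; apply: nczero_scale.
apply: nczero_flatten => s /mapP [ys]; rewrite mem_filter => /andP [/eqP ys_z ys_in] ->.
apply: nczero_opw; first by rewrite size_map (size_gseqs ys_in).
move: z_odd; rewrite -ys_z => /odd_perm_prod [y y_in y_odd].
by apply/mapP; exists y; rewrite ?P_odd.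
Qed.

Definition odd_grade_ideal (u : DS3) : Prop :=
  forall g h, ~~ odd_perm g -> u (g, h) = 0.

Definition dbasis (p : S3 * S3) : DS3 := [ffun q => (q == p)%:R].

Lemma dcomul_sum_dtens (u : DS3) :
  dcomul u = \sum_(x in {: S3 * S3 * S3})
    dtens (u ((x.1.1 * x.1.2)%g, x.2) *: dbasis (x.1.1, x.2)) (dbasis (x.1.2, x.2)).
Proof.
apply/ffunP => [[[x1 h1] [x2 h2]]].
rewrite sum_ffunE !ffunE /= (bigD1 (x1, x2, h1)) //= big1 ?addr0.
  rewrite !ffunE /= !xpair_eqE !eqxx /= -[_ *: _]/(_ * _) mulr1.
  by case: (eqVneq h1 h2) => [->|_]; rewrite ?eqxx ?mulr1 ?mulr0.
move=> [[x y] h] xyh_neq; rewrite !ffunE /= !xpair_eqE -[_ *: _]/(_ * _).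
case: (eqVneq x1 x) => [Ex|]; last by rewrite mulr0 mul0r.
case: (eqVneq h1 h) => [Eh|]; last by rewrite andbF mulr0 mul0r.
case: (eqVneq x2 y) => [Ey|]; last by rewrite mulr0.
by rewrite -Ex -Ey -Eh eqxx in xyh_neq.
Qed.

Lemma odd_grade_dtens (u : DS3) (x y h : S3) :
  odd_grade_ideal u ->
  odd_grade_ideal (u ((x * y)%g, h) *: dbasis (x, h)) \/ odd_grade_ideal (dbasis (y, h)).
Proof.
move=> Iu; case xy_odd: (odd_perm (x * y)%g); last first.
  by left => g h' _; rewrite !ffunE Iu ?xy_odd // scale0r.
move: xy_odd; rewrite odd_permM; case x_odd: (odd_perm x) => /= y_odd.
  left => g h' g_even; rewrite !ffunE.
  case: eqP => [[Eg _]|]; last by rewrite scaler0.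
  by rewrite Eg x_odd in g_even.
right => g h' g_even; rewrite !ffunE.
by case: eqP => [[Eg _]|] //; rewrite Eg y_odd in g_even.
Qed.

Lemma hopf_ideal_odd_grade : hopf_ideal odd_grade_ideal.
Proof.
split.
- split; first by move=> g h _; rewrite ffunE.
  by move=> c u v Iu Iv g h g_even; rewrite !ffunE Iu // Iv // scaler0 addr0.
- move=> a u Iu; split=> g h g_even; rewrite ffunE /=.
    apply: big1 => q _; apply: big1 => -[g' h'] _ /=.
    case: ifP => // /and3P [/eqP E1 /eqP E2 _].
    rewrite Iu ?mulr0 //; move: g_even; rewrite -E2 E1 !odd_permM odd_permV.
    by case: (odd_perm q.2); case: (odd_perm g').
  apply: big1 => -[g' h'] _; apply: big1 => q' _ /=.
  by case: ifP => // /and3P [_ /eqP E _]; rewrite Iu ?mul0r // E.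
- move=> u Iu; set F := fun x : S3 * S3 * S3 =>
    (u ((x.1.1 * x.1.2)%g, x.2) *: dbasis (x.1.1, x.2), dbasis (x.1.2, x.2)).
  exists #|{: S3 * S3 * S3}|, (fun k => (F (enum_val k)).1), (fun k => (F (enum_val k)).2).
  split; first by move=> k; case: (enum_val k) => [[x y] h]; exact: odd_grade_dtens.
  by rewrite dcomul_sum_dtens (big_enum_val (fun x => dtens (F x).1 (F x).2)).
- by move=> u Iu; rewrite /dcounit big1 // => h _; rewrite Iu // odd_perm1.
- move=> u Iu g h g_even; rewrite ffunE /= Iu //.
  by rewrite !odd_permM !odd_permV; move: g_even; case: (odd_perm g); case: (odd_perm h).
Qed.

Lemma inner_faithful_odd_grade (r : 'I_3 -> 'M[CC]_3) (rho P : S3 -> 'M[CC]_3) :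
  inner_faithful r rho P -> exists t, odd_perm t /\ P t != 0.
Proof.
move=> faithful.
case: (boolP [exists t, odd_perm t && (P t != 0)]).
  by move/existsP => [t /andP [t_odd Pt]]; exists t.
rewrite negb_exists => /forallP P_odd.
have {}P_odd t : odd_perm t -> P t = 0.
  by move=> t_odd; move: (P_odd t); rewrite t_odd /= negbK => /eqP.
have annihilates p u : odd_grade_ideal u -> in_rel r (ncactD rho P p u).
  move=> Iu; exists [::]; split => // w.
  rewrite /ncoef big_nil -/(ncoef _ w) ncoef_nczero //.
  apply: nczero_flatten => s /mapP [[g h] _ ->].
  case: (boolP (odd_perm g)) => [g_odd | /Iu ->]; last exact: nczero_scale0.
  by apply/nczero_scale/nczero_ncact/nczero_ncproj.
have Iu : odd_grade_ideal (dbasis (tperm (0 : 'I_3) 1, 1%g)).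
  move=> g h g_even; rewrite ffunE xpair_eqE.
  by case: (eqVneq g (tperm 0 1)) => [Eg|] //; rewrite Eg odd_tperm in g_even.
move: (faithful _ hopf_ideal_odd_grade annihilates _ Iu) => /ffunP /(_ (tperm 0 1, 1%g)).
by rewrite !ffunE eqxx => /eqP; rewrite oner_eq0.
Qed.

(** * Transpositions of S_3 *)

Definition i0 : 'I_3 := @Ordinal 3 0 isT.
Definition i1 : 'I_3 := @Ordinal 3 1 isT.
Definition i2 : 'I_3 := @Ordinal 3 2 isT.

(* transp k is the transposition fixing the point 2 - k; indices k are read
   in Z/3Z, where conjugation of transpositions becomes k |-> -(m + k). *)
Definition transp (k : 'I_3) : S3 :=
  if val k == 0%N then tperm i0 i1 else if val k == 1%N then tperm i0 i2 else tperm i1 i2.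

Definition cyc : S3 := (transp i0 * transp i1)%g.
Definition cyc' : S3 := (transp i1 * transp i0)%g.

Lemma eq_S3 (s t : S3) : (s == t) = [&& s i0 == t i0, s i1 == t i1 & s i2 == t i2].
Proof.
apply/eqP/and3P => [-> //|[/eqP E0 /eqP E1 /eqP E2]].
apply/permP => -[[|[|[|//]]] Hi].
- by rewrite (_ : Ordinal Hi = i0) //; apply: val_inj.
- by rewrite (_ : Ordinal Hi = i1) //; apply: val_inj.
- by rewrite (_ : Ordinal Hi = i2) //; apply: val_inj.
Qed.

Ltac ordcase k := case: k => [[|[|[|//]]] ?].
Ltac S3comp := rewrite ?eq_S3 /cyc /cyc' /transp /= ?permM ?permE /=.

Lemma transp_inj (i j : 'I_3) : (transp i == transp j) = (i == j).
Proof. by ordcase i; ordcase j; S3comp. Qed.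

Lemma transpV (k : 'I_3) : ((transp k)^-1 = transp k)%g.
Proof. by rewrite /transp; case: ifP => _; [|case: ifP => _]; rewrite tpermV. Qed.

Lemma transp_conj (k m : 'I_3) : (transp k ^ transp m)%g = transp (- (m + k)).
Proof. by apply/eqP; rewrite /conjg transpV; ordcase k; ordcase m; S3comp. Qed.

Lemma transp_mul_eq1 (i j : 'I_3) : (transp i * transp j == 1)%g = (i == j).
Proof. by ordcase i; ordcase j; S3comp; rewrite ?perm1. Qed.

Lemma transp_mul_cyc (i j : 'I_3) : (transp i * transp j == cyc)%g = (j == i + 1).
Proof. by ordcase i; ordcase j; S3comp. Qed.

Lemma transp_mul_cyc' (i j : 'I_3) : (transp i * transp j == cyc')%g = (i == j + 1).
Proof. by ordcase i; ordcase j; S3comp. Qed.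

Lemma cyc_conj (m : 'I_3) : (cyc ^ transp m)%g = cyc'.
Proof. by apply/eqP; rewrite /conjg transpV; ordcase m; S3comp. Qed.

Lemma cyc'_conj (m : 'I_3) : (cyc' ^ transp m)%g = cyc.
Proof. by apply/eqP; rewrite /conjg transpV; ordcase m; S3comp. Qed.

Lemma odd_perm_transp (g : S3) : odd_perm g -> exists k, g = transp k.
Proof.
pose s := [:: 1; transp i0; transp i1; transp i2; cyc; cyc']%g.
have s_uniq : uniq s by rewrite /= !inE; S3comp; rewrite ?perm1.
have /subset_cardP : #|s| = #|{: S3}| by rewrite (card_uniqP s_uniq) card_Sn.
rewrite subset_predT => /(_ isT) /(_ g); rewrite !inE.
case/or4P => [/eqP->|/eqP->|/eqP->|/orP[/eqP->|/orP[/eqP->|/eqP->]]].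
- by rewrite odd_perm1.
- by exists i0.
- by exists i1.
- by exists i2.
- by rewrite odd_permM !odd_tperm.
- by rewrite odd_permM !odd_tperm.
Qed.

Lemma conj_idxK (m a : 'I_3) : - (m + - (m + a)) = a.
Proof. by rewrite opprD opprK addKr. Qed.

Lemma conj_idx_eq (m a b : 'I_3) : (- (m + a) == - (m + b)) = (a == b).
Proof. by rewrite eqr_opp (inj_eq (addrI m)). Qed.

Lemma conj_idx_onto (k j : 'I_3) : exists m, - (m + k) = j.
Proof. by exists (- (j + k)); rewrite opprD opprK addrK. Qed.

Lemma ord3_cases (i : 'I_3) : [\/ i = i0, i = i1 | i = i2].
Proof.
case: i => [[|[|[|//]]] Hi]; [constructor 1|constructor 2|constructor 3]; exact: val_inj.
Qed.

(** * A basis adapted to the grading *)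

Lemma transp_grade_neq0 (rho P : S3 -> 'M[CC]_3) :
  DS3_module rho P -> (exists t, odd_perm t /\ P t != 0) -> forall k, P (transp k) != 0.
Proof.
move=> [rho1 rhoM _ _ P_conj] [_ [/odd_perm_transp [k0 ->] Pk0]] k.
have [m <-] := conj_idx_onto k0 k.
apply: contra Pk0 => /eqP P0; apply/eqP.
have := P_conj (transp k0) (transp m); rewrite transp_conj P0 mulmx0 => /esym.
move/(congr1 (fun X => X *m rho (transp m)^-1%g)).
by rewrite mul0mx -mulmxA -rhoM mulgV rho1 mulmx1.
Qed.

Lemma grading_basis (rho P : S3 -> 'M[CC]_3) :
  DS3_module rho P -> (forall k, P (transp k) != 0) ->
  exists Q : 'M[CC]_3, [/\ Q \in unitmx,
    (forall k, Q *m P (transp k) *m invmx Q = delta_mx k k) &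
    (forall x, (forall k, x != transp k) -> Q *m P x *m invmx Q = 0)].
Proof.
move=> [_ _ PP _ _] P_neq0.
pose ik k := odflt i0 [pick i | row i (P (transp k)) != 0].
pose v k := row (ik k) (P (transp k)).
have v_neq0 k : v k != 0.
  rewrite /v /ik; case: pickP => [i //|rows0] /=.
  move: (P_neq0 k); apply: contraR => _; apply/eqP/row_matrixP => i.
  by move: (rows0 i) => /negbFE /eqP ->; rewrite row0.
have vP k j : v k *m P (transp j) = if k == j then v k else 0.
  by rewrite /v -row_mul PP transp_inj; case: (k == j); rewrite ?row0.
pose Q := \matrix_(k < 3) v k.
have Q_unit : Q \in unitmx.
  rewrite -row_free_unit; apply: inj_row_free => a aQ0.
  apply/rowP => j; rewrite mxE.
  have := congr1 (fun X => X *m P (transp j)) aQ0.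
  rewrite mul0mx (mulmx_sum_row a Q) mulmx_suml (bigD1 j) //= big1 => [|k kj].
    rewrite addr0 -scalemxAl rowK vP eqxx => /eqP.
    by rewrite scaler_eq0 (negbTE (v_neq0 j)) orbF => /eqP.
  by rewrite -scalemxAl rowK vP (negbTE kj) scaler0.
exists Q; split => //.
  move=> k; apply: (canLR (mulmxK Q_unit)).
  apply/row_matrixP => i; rewrite !row_mul rowK vP rowE mul_delta_mx_cond.
  case: (eqVneq i k) => [->|_]; first by rewrite mulr1n -rowE rowK.
  by rewrite mulr0n mul0mx.
move=> x x_even; suff -> : Q *m P x = 0 by rewrite mul0mx.
apply/row_matrixP => i; rewrite row_mul rowK row0.
have <- : v i *m P (transp i) = v i by rewrite vP eqxx.
rewrite -mulmxA PP; case: eqP => [E|_]; last by rewrite mulmx0.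
by move: (x_even i); rewrite E eqxx.
Qed.

Section BaseChange.
Variable Q : 'M[CC]_3.
Hypothesis Q_unit : Q \in unitmx.

(* Under the change of coordinates v |-> v Q of V, the tensor u^T w becomes
   Q^T u^T w Q. *)
Definition basechange (M : 'M[CC]_3) := (invmx Q)^T *m M *m invmx Q.
Definition basechangeV (M : 'M[CC]_3) := Q^T *m M *m Q.

Lemma trmx_invQ_Q : (invmx Q)^T *m Q^T = 1.
Proof. by rewrite -trmx_mul mulmxV // trmx1. Qed.

Lemma trmx_Q_invQ : Q^T *m (invmx Q)^T = 1.
Proof. by rewrite -trmx_mul mulVmx // trmx1. Qed.

Lemma basechangeK M : basechangeV (basechange M) = M.
Proof.
by rewrite /basechangeV /basechange !mulmxA trmx_Q_invQ mul1mx -mulmxA mulVmx ?mulmx1.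
Qed.

Lemma basechangeVK M : basechange (basechangeV M) = M.
Proof.
by rewrite /basechangeV /basechange !mulmxA trmx_invQ_Q mul1mx -mulmxA mulmxV ?mulmx1.
Qed.

Lemma basechange_sum (r : 'I_3 -> 'M[CC]_3) (c : 'I_3 -> CC) :
  basechange (\sum_(k < 3) c k *: r k) = \sum_(k < 3) c k *: basechange (r k).
Proof.
rewrite /basechange mulmx_sumr mulmx_suml; apply: eq_bigr => k _.
by rewrite -scalemxAr -scalemxAl.
Qed.

Lemma inR_basechange (r : 'I_3 -> 'M[CC]_3) M :
  inR (fun k => basechange (r k)) M <-> inR r (basechangeV M).
Proof.
split => [[c ->]|[c Ec]]; exists c; first by rewrite -basechange_sum basechangeK.
by rewrite -basechange_sum -Ec basechangeVK.
Qed.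

Lemma lin_indep3_basechange (r : 'I_3 -> 'M[CC]_3) :
  lin_indep3 r -> lin_indep3 (fun k => basechange (r k)).
Proof.
move=> indep c sum0; apply: indep.
by rewrite -[LHS]basechangeK basechange_sum sum0 /basechangeV mulmx0 mul0mx.
Qed.

Lemma basechangeV_conj (A B M : 'M[CC]_3) :
  basechangeV ((Q *m A *m invmx Q)^T *m M *m (Q *m B *m invmx Q)) =
  A^T *m basechangeV M *m B.
Proof.
rewrite /basechangeV !trmx_mul !mulmxA trmx_Q_invQ mul1mx.
by rewrite -(mulmxA _ (invmx Q) Q) mulVmx // mulmx1.
Qed.

Lemma DS3_module_conj (rho P : S3 -> 'M[CC]_3) :
  DS3_module rho P ->
  DS3_module (fun g => Q *m rho g *m invmx Q) (fun x => Q *m P x *m invmx Q).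
Proof.
have QQ A B : Q *m A *m invmx Q *m (Q *m B *m invmx Q) = Q *m (A *m B) *m invmx Q.
  by rewrite !mulmxA -[_ *m invmx Q *m Q]mulmxA mulVmx // mulmx1.
move=> [rho1 rhoM PP P1 P_conj]; split.
- by rewrite rho1 mulmx1 mulmxV.
- by move=> g h; rewrite rhoM QQ.
- by move=> x y; rewrite QQ PP; case: (x == y); rewrite ?mulmx0 ?mul0mx.
- by rewrite -mulmx_suml -mulmx_sumr P1 mulmx1 mulmxV.
- by move=> x g; rewrite !QQ P_conj.
Qed.

Lemma R_submodule_basechange (r : 'I_3 -> 'M[CC]_3) (rho P : S3 -> 'M[CC]_3) :
  R_submodule r rho P ->
  R_submodule (fun k => basechange (r k)) (fun g => Q *m rho g *m invmx Q)
              (fun x => Q *m P x *m invmx Q).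
Proof.
move=> RS M /inR_basechange /RS [R_act R_grade]; split => [g|z]; apply/inR_basechange.
  by rewrite basechangeV_conj; apply: R_act.
rewrite /basechangeV mulmx_sumr mulmx_suml.
rewrite (eq_bigr (fun x => \sum_(y | (x * y)%g == z) (P x)^T *m basechangeV M *m P y)).
  exact: R_grade.
move=> x _; rewrite mulmx_sumr mulmx_suml; apply: eq_bigr => y _.
exact: basechangeV_conj.
Qed.

End BaseChange.

(** * Linear algebra on the relation space *)

Lemma rank_one_combination (C : numClosedFieldType) (d f g : 'I_3 -> C) :
  (forall k, d k != 0) -> (forall k, f k != 0) -> (forall k, g k != 0) ->
  (forall k, f k * g k * d (k - 1) = f (k + 1) * g (k + 1) * d k) ->
  exists (al be : C) (u w : 'rV[C]_3), [/\ u != 0, w != 0 &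
    forall i j, u 0 i * w 0 j = (i == j)%:R * d i + al * ((j == i + 1)%:R * f i)
                                + be * ((i == j + 1)%:R * g j)].
Proof.
move=> d_neq0 f_neq0 g_neq0 balanced.
have E1 := balanced i0; have E2 := balanced i2.
have [e1 e2 e3 e4] : [/\ i0 - 1 = i2, i0 + 1 = i1, i2 - 1 = i1 & i2 + 1 = i0].
  by split; apply: val_inj.
rewrite e1 e2 in E1; rewrite e3 e4 in E2.
set D0 := d i0 in E1 E2 *; set D1 := d i1 in E1 E2 *; set D2 := d i2 in E1 E2 *.
set F0 := f i0 in E1 E2 *; set F1 := f i1 in E1 E2 *; set F2 := f i2 in E1 E2 *.
set G0 := g i0 in E1 E2 *; set G1 := g i1 in E1 E2 *; set G2 := g i2 in E1 E2 *.
have [nD0 nD1 nD2] : [/\ D0 != 0, D1 != 0 & D2 != 0] by split; apply: d_neq0.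
have [nF0 nF1 nF2] : [/\ F0 != 0, F1 != 0 & F2 != 0] by split; apply: f_neq0.
have nG0 : G0 != 0 by apply: g_neq0.
pose X := D0 * D1 * D2 / (F0 * F1 * F2).
have nX : X != 0 by rewrite /X mulf_neq0 ?invr_eq0 ?mulf_neq0.
have [al al3 nal] : exists2 al : C, al ^+ 3 = X & al != 0.
  by exists (3.-root X); rewrite ?rootCK ?rootC_eq0.
have eD2 : D2 = al ^+ 3 * F0 * F1 * F2 / (D0 * D1).
  by rewrite al3 /X; field; rewrite ?nD0 ?nD1 ?nF0 ?nF1 ?nF2.
have eG1 : G1 = F0 * G0 * D2 / (F1 * D0).
  by rewrite E1; field; rewrite ?nD0 ?nF1.
have eG2 : G2 = F0 * G0 * D2 / (F2 * D1).
  by rewrite -E2; field; rewrite ?nD1 ?nF2.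
(* The diagonal and superdiagonal entries determine u = (1, u1, u2) and
   w = (D0, w1, w2), and the entry (1, 0) determines be; the entry (2, 0)
   holds because al ^+ 3 = X, the entries (2, 1) and (0, 2) by E1 and E2. *)
pose be := D0 * D1 / (al * F0 * G0).
pose w1 := al * F0; pose u1 := D1 / w1; pose w2 := al * F1 / u1; pose u2 := D2 / w2.
exists al, be, (\row_i (if val i == 0%N then 1 else if val i == 1%N then u1 else u2)),
  (\row_i (if val i == 0%N then D0 else if val i == 1%N then w1 else w2)).
split.
- by apply/eqP => /matrixP /(_ 0 i0); rewrite !mxE /= => /eqP; rewrite oner_eq0.
- by apply/eqP => /matrixP /(_ 0 i0); rewrite !mxE /= => /eqP; rewrite (negbTE nD0).
- move=> i j; rewrite !mxE.
  case: (ord3_cases i) => ->; case: (ord3_cases j) => ->;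
    rewrite /= ?mulr0 ?mul0r ?mulr1 ?mul1r ?addr0 ?add0r.
  all: rewrite -/D0 -/D1 -/D2 -/F0 -/F1 -/F2 -/G0 -/G1 -/G2 /u2 /w2 /u1 /w1 /be.
  all: rewrite ?eG1 ?eG2 ?eD2.
  all: by field; rewrite ?nD0 ?nD1 ?nF0 ?nF1 ?nF2 ?nG0 ?nal.
Qed.

(* If an involution multiplies D by l, and exchanges F and G up to the factors
   n and n', then the ratio F_ab G_ba / (D_aa D_bb) is transported along it. *)
Lemma transport_ratio (R : comPzRingType) (Fab Gba Da Db Dpa Dpb Fpba Gpab ga gb l n n' : R) :
  ga * Da * ga = l * Dpa -> gb * Db * gb = l * Dpb ->
  ga * Fab * gb = n * Gpab -> gb * Gba * ga = n' * Fpba -> l * l = 1 -> n * n' = 1 ->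
  Fab * Gba * Dpa * Dpb = Fpba * Gpab * Da * Db.
Proof.
move=> Ea Eb EF EG ll nn.
transitivity ((Fab * Gba * (l * Dpa) * (l * Dpb))); first by rewrite -[LHS]mulr1 -ll; ring.
rewrite -Ea -Eb.
transitivity ((ga * Fab * gb) * (gb * Gba * ga) * Da * Db); first by ring.
by rewrite EF EG -[RHS]mul1r -nn; ring.
Qed.

Definition gradeT (z : S3) (M : 'M[CC]_3) : 'M[CC]_3 :=
  \matrix_(i, j) ((transp i * transp j == z)%g%:R * M i j).

Lemma gradeT_id z M : gradeT z (gradeT z M) = gradeT z M.
Proof. by apply/matrixP => i j; rewrite !mxE mulrA -natrM mulnb andbb. Qed.

Lemma gradeT_sum z (c : 'I_3 -> CC) (N : 'I_3 -> 'M[CC]_3) :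
  gradeT z (\sum_(k < 3) c k *: N k) = \sum_(k < 3) c k *: gradeT z (N k).
Proof.
apply/matrixP => i j; rewrite !mxE !summxE mulr_sumr; apply: eq_bigr => k _.
by rewrite !mxE mulrCA.
Qed.

Lemma gradeT_split M : gradeT 1 M + gradeT cyc M + gradeT cyc' M = M.
Proof.
apply/matrixP => i j; rewrite !mxE -!mulrDl transp_mul_eq1 transp_mul_cyc transp_mul_cyc'.
by rewrite (_ : _ + _ = 1) ?mul1r //; ordcase i; ordcase j; rewrite /= ?addr0 ?add0r.
Qed.

Section Coordinates.
Variable r : 'I_3 -> 'M[CC]_3.
Hypothesis r_indep : lin_indep3 r.

Lemma inR_add M N : inR r M -> inR r N -> inR r (M + N).
Proof.
move=> [c ->] [d ->]; exists (fun k => c k + d k).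
by rewrite -big_split; apply: eq_bigr => k _; rewrite scalerDl.
Qed.

Lemma inR_scale a M : inR r M -> inR r (a *: M).
Proof.
move=> [c ->]; exists (fun k => a * c k).
by rewrite scaler_sumr; apply: eq_bigr => k _; rewrite scalerA.
Qed.

Definition comb (a : 'rV[CC]_3) : 'M[CC]_3 := \sum_(k < 3) a 0 k *: r k.

Lemma combD a b : comb (a + b) = comb a + comb b.
Proof. by rewrite /comb -big_split; apply: eq_bigr => k _; rewrite mxE scalerDl. Qed.

Lemma combZ c a : comb (c *: a) = c *: comb a.
Proof. by rewrite /comb scaler_sumr; apply: eq_bigr => k _; rewrite mxE scalerA. Qed.

Lemma comb0 : comb 0 = 0.
Proof. by rewrite /comb big1 // => k _; rewrite mxE scale0r. Qed.

Lemma comb_inj : injective comb.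
Proof.
move=> a b Eab; apply/rowP => k; apply/eqP; rewrite -subr_eq0; apply/eqP.
move: k; apply: (r_indep (c := fun k => a 0 k - b 0 k)).
under eq_bigr => k _ do rewrite scalerBl.
by rewrite sumrB -/(comb a) -/(comb b) Eab subrr.
Qed.

Lemma inR_comb M : inR r M -> exists a, M = comb a.
Proof.
move=> [c ->]; exists (\row_k c k).
by rewrite /comb; apply: eq_bigr => k _; rewrite mxE.
Qed.

Lemma comb_inR a : inR r (comb a).
Proof. by exists (fun k => a 0 k). Qed.

Lemma comb_delta k : comb (delta_mx 0 k) = r k.
Proof.
rewrite /comb (bigD1 k) //= big1 => [|j jk]; last by rewrite mxE (negbTE jk) scale0r.
by rewrite mxE !eqxx scale1r addr0.
Qed.

Lemma comb_sum (c : 'I_3 -> CC) (b : 'I_3 -> 'rV[CC]_3) :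
  \sum_(k < 3) c k *: comb (b k) = comb (\sum_(k < 3) c k *: b k).
Proof.
rewrite /comb; under eq_bigr => k _ do rewrite scaler_sumr.
rewrite exchange_big /=; apply: eq_bigr => j _.
rewrite summxE scaler_suml; apply: eq_bigr => k _.
by rewrite mxE scalerA.
Qed.

Lemma comb_mx_inj (X Y : 'M[CC]_3) :
  (forall a, comb (a *m X) = comb (a *m Y)) -> X = Y.
Proof. by move=> EXY; apply/row_matrixP => k; rewrite !rowE; apply/comb_inj/EXY. Qed.

Lemma coord_mx (f : 'M[CC]_3 -> 'M[CC]_3) :
  (forall M, inR r M -> inR r (f M)) ->
  (forall (c : 'I_3 -> CC) (N : 'I_3 -> 'M[CC]_3),
      f (\sum_(k < 3) c k *: N k) = \sum_(k < 3) c k *: f (N k)) ->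
  exists A : 'M[CC]_3, forall a, f (comb a) = comb (a *m A).
Proof.
move=> fR f_lin.
have /fin_all_exists [b Eb] k : exists b : 'rV[CC]_3, f (r k) = comb b.
  by apply/inR_comb/fR; rewrite -comb_delta; apply: comb_inR.
exists (\matrix_k b k) => a.
rewrite /comb f_lin -/(comb a); under eq_bigr => k _ do rewrite Eb.
by rewrite comb_sum mulmx_sum_row; congr comb; apply: eq_bigr => k _; rewrite rowK.
Qed.

Lemma coord_mx_idem (f : 'M[CC]_3 -> 'M[CC]_3) (A : 'M[CC]_3) :
  (forall a, f (comb a) = comb (a *m A)) -> (forall M, f (f M) = f M) -> A *m A = A.
Proof. by move=> fA ff; apply: comb_mx_inj => a; rewrite mulmxA -!fA ff. Qed.

Lemma fixed_line (f : 'M[CC]_3 -> 'M[CC]_3) (A : 'M[CC]_3) :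
  (forall a, f (comb a) = comb (a *m A)) -> A *m A = A -> \rank A = 1%N ->
  exists D, [/\ inR r D, f D = D, D != 0 &
    forall M, inR r M -> f M = M -> exists l, M = l *: D].
Proof.
move=> fA AA rankA.
have [i Ai] : exists i, row i A != 0.
  case: (pickP (fun i => row i A != 0)) => [i Ai|rows0]; first by exists i.
  move: rankA; suff -> : A = 0 by rewrite mxrank0.
  by apply/row_matrixP => i; move: (rows0 i) => /negbFE/eqP ->; rewrite row0.
set a0 := row i A.
have a0A : a0 *m A = a0 by rewrite /a0 -row_mul AA.
exists (comb a0); split; [exact: comb_inR | by rewrite fA a0A | |].
  by apply: contra Ai => /eqP E; apply/eqP/comb_inj; rewrite E comb0.
move=> M /inR_comb [a ->] fM.
have aA : a *m A = a by apply: comb_inj; rewrite -fA.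
have a_sub : (a <= a0)%MS.
  have A_a0 : (A <= a0)%MS.
    by rewrite -(mxrank_leqif_sup (row_sub i A)).2 rankA rank_rV Ai.
  by rewrite -aA (submx_trans (submxMl a A) A_a0).
have /submxP [c ->] := a_sub.
by exists (c 0 0); rewrite {1}[c]mx11_scalar mul_scalar_mx combZ.
Qed.

Lemma rank_one_of_diagonal (A : 'M[CC]_3) :
  (forall a, gradeT 1 (comb a) = comb (a *m A)) -> A *m A = A -> \rank A = 3%N ->
  rank_one_relation r.
Proof.
move=> gradeA AA rankA.
have A1 : A = 1.
  have uA : A \in unitmx by rewrite -row_free_unit /row_free rankA.
  by rewrite -(mulKmx uA A) AA mulVmx.
pose Dm := \matrix_(k, i) r k i i.
have comb_diag a : comb a = \matrix_(i, j) ((i == j)%:R * (a *m Dm) 0 j).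
  have -> : comb a = gradeT 1 (comb a) by rewrite gradeA A1 mulmx1.
  apply/matrixP => i j.
  rewrite !mxE transp_mul_eq1; case: (eqVneq i j) => [->|]; last by rewrite !mul0r.
  by rewrite !mul1r summxE; apply: eq_bigr => k _; rewrite !mxE.
have uDm : Dm \in unitmx.
  rewrite -row_free_unit; apply: inj_row_free => a aD0.
  by apply: comb_inj; rewrite comb0 comb_diag aD0; apply/matrixP => i j; rewrite !mxE mulr0.
pose u0 : 'rV[CC]_3 := delta_mx 0 i0.
have u0_neq0 : u0 != 0.
  by apply/eqP => /matrixP /(_ 0 i0); rewrite !mxE !eqxx => /eqP; rewrite oner_eq0.
exists u0, u0; split => //.
suff -> : u0^T *m u0 = comb (u0 *m invmx Dm) by apply: comb_inR.
rewrite comb_diag mulmxKV // /u0 trmx_delta mul_delta_mx.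
apply/matrixP => i j; rewrite !mxE eqxx /=.
case: (eqVneq i j) => [->|ij]; first by rewrite mul1r andbb.
by rewrite mul0r; case: (eqVneq i i0) => [Ei|] //=; case: eqP => // Ej; rewrite Ei Ej eqxx in ij.
Qed.

End Coordinates.

(** * The relation space in an adapted basis *)

Section AdaptedBasis.
Variables (r : 'I_3 -> 'M[CC]_3) (rho P : S3 -> 'M[CC]_3).
Hypothesis r_indep : lin_indep3 r.
Hypothesis module : DS3_module rho P.
Hypothesis R_sub : R_submodule r rho P.
Hypothesis P_transp : forall k, P (transp k) = delta_mx k k.
Hypothesis P_even : forall x, (forall k, x != transp k) -> P x = 0.

Lemma P_mx x : P x = \matrix_(a, b) ((x == transp a) && (a == b))%:R.
Proof.
case: (boolP [exists k, x == transp k]) => [/existsP [k /eqP ->]|].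
  rewrite P_transp; apply/matrixP => a b; rewrite !mxE transp_inj.
  by case: (eqVneq k a) => [->|]; first by rewrite eq_sym.
rewrite negb_exists => /forallP x_even; rewrite P_even => [|k]; last exact: x_even.
by apply/matrixP => a b; rewrite !mxE (negbTE (x_even a)).
Qed.

Lemma grade_entry x y M i j :
  ((P x)^T *m M *m P y) i j = ((x == transp i) && (y == transp j))%:R * M i j.
Proof.
rewrite !mxE (bigD1 j) //= big1 => [|b bj]; last first.
  by rewrite [P y]P_mx !mxE (negbTE bj) andbF mulr0.
rewrite addr0 !mxE (bigD1 i) //= big1 => [|a ai]; last first.
  by rewrite [P x]P_mx !mxE (negbTE ai) andbF mul0r.
rewrite addr0 [P x]P_mx [P y]P_mx !mxE !eqxx !andbT.
by case: (x == transp i); case: (y == transp j); rewrite ?mulr1 ?mul1r ?mulr0 ?mul0r.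
Qed.

Lemma grade_component M z :
  \sum_(x : S3) \sum_(y : S3 | (x * y)%g == z) (P x)^T *m M *m P y = gradeT z M.
Proof.
apply/matrixP => i j.
have row_sum x : (\sum_(y : S3 | (x * y)%g == z) (P x)^T *m M *m P y) i j =
                 (x == transp i)%:R * gradeT z M i j.
  rewrite summxE big_mkcond (bigD1 (transp j)) //= big1 => [|y yj]; last first.
    by case: ifP => // _; rewrite grade_entry (negbTE yj) andbF mul0r.
  rewrite addr0 grade_entry eqxx andbT mxE.
  case: (eqVneq x (transp i)) => [->|_]; last by case: ifP; rewrite !mul0r.
  by case: ifP; rewrite ?mul1r ?mul0r.
rewrite summxE (eq_bigr _ (fun x _ => row_sum x)).
rewrite (bigD1 (transp i)) //= big1 => [|x xi]; last by rewrite (negbTE xi) mul0r.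
by rewrite eqxx mul1r addr0.
Qed.

Lemma inR_gradeT z M : inR r M -> inR r (gradeT z M).
Proof. by move/R_sub => [_ /(_ z)]; rewrite grade_component. Qed.

Definition tens_act g M := (rho g)^T *m M *m rho g.

Lemma inR_tens_act g M : inR r M -> inR r (tens_act g M).
Proof. by move/R_sub => [/(_ g)]. Qed.

Lemma tens_act_sum g (c : 'I_3 -> CC) (N : 'I_3 -> 'M[CC]_3) :
  tens_act g (\sum_(k < 3) c k *: N k) = \sum_(k < 3) c k *: tens_act g (N k).
Proof.
rewrite /tens_act mulmx_sumr mulmx_suml; apply: eq_bigr => k _.
by rewrite -scalemxAr -scalemxAl.
Qed.

Lemma tens_act_scale g c N : tens_act g (c *: N) = c *: tens_act g N.
Proof. by rewrite /tens_act -scalemxAr -scalemxAl. Qed.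

Lemma rho_transp_invol m : rho (transp m) *m rho (transp m) = 1.
Proof.
case: module => rho1 rhoM _ _ _.
by rewrite -rhoM (eqP (_ : transp m * transp m == 1)%g) ?transp_mul_eq1.
Qed.

Lemma tens_act_transpK m N : tens_act (transp m) (tens_act (transp m) N) = N.
Proof.
rewrite /tens_act !mulmxA -trmx_mul rho_transp_invol trmx1 mul1mx.
by rewrite -mulmxA rho_transp_invol mulmx1.
Qed.

Definition gam m a := rho (transp m) a (- (m + a)).

(* V_x . g <= V_(x^g) makes rho (transp m) a monomial matrix. *)
Lemma rho_transp_entry m a j : rho (transp m) a j = (j == - (m + a))%:R * gam m a.
Proof.
have delta_mul X b : (delta_mx a a *m X) a b = X a b.
  rewrite mxE (bigD1 a) //= big1 => [|k ka]; last by rewrite mxE (negbTE ka) andbF mul0r.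
  by rewrite mxE !eqxx mul1r addr0.
case: module => _ _ _ _ /(_ (transp a) (transp m)).
rewrite transp_conj !P_transp => /matrixP /(_ a j); rewrite delta_mul => <-.
rewrite mxE (bigD1 (- (m + a))) //= big1 => [|k kc]; last first.
  by rewrite [delta_mx _ _ _ _]mxE (negbTE kc) mulr0.
by rewrite [delta_mx _ _ _ _]mxE eqxx addr0 delta_mul /= eq_sym mulrC.
Qed.

Lemma gam_neq0 m a : gam m a != 0.
Proof.
have := rho_transp_invol m; move/matrixP/(_ a a).
rewrite !mxE eqxx (bigD1 (- (m + a))) //= big1 ?addr0 => [|j ja]; last first.
  by rewrite rho_transp_entry (negbTE ja) !mul0r.
rewrite -/(gam m a) => E; apply/eqP => g0; move: E.
by rewrite g0 mul0r => /eqP; rewrite eq_sym oner_eq0.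
Qed.

Lemma tens_act_entry m N a b :
  tens_act (transp m) N (- (m + a)) (- (m + b)) = gam m a * N a b * gam m b.
Proof.
rewrite /tens_act !mxE (bigD1 b) //= big1 => [|b' b'b]; last first.
  by rewrite rho_transp_entry conj_idx_eq eq_sym (negbTE b'b) mul0r mulr0.
rewrite addr0 !mxE (bigD1 a) //= big1 => [|a' a'a]; last first.
  by rewrite !mxE rho_transp_entry conj_idx_eq eq_sym (negbTE a'a) !mul0r.
by rewrite addr0 !mxE !rho_transp_entry !eqxx !mul1r mulrC mulrA.
Qed.

Lemma tens_act_gradeT m z N :
  tens_act (transp m) (gradeT z N) = gradeT (z ^ transp m) (tens_act (transp m) N).
Proof.
apply/matrixP => i j; rewrite -(conj_idxK m i) -(conj_idxK m j).
move: (- (m + i)) (- (m + j)) => a b.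
rewrite (tens_act_entry m (gradeT z N)) ![gradeT _ _ _ _]mxE (tens_act_entry m N).
rewrite -!transp_conj -conjMg (inj_eq (conjg_inj (transp m))).
by ring.
Qed.

Section LineCase.
Variables D F : 'M[CC]_3.
Hypotheses (RD : inR r D) (gradeD : gradeT 1 D = D) (D_neq0 : D != 0).
Hypothesis D_line : forall M, inR r M -> gradeT 1 M = M -> exists l, M = l *: D.
Hypotheses (RF : inR r F) (gradeF : gradeT cyc F = F) (F_neq0 : F != 0).
Hypothesis F_line : forall M, inR r M -> gradeT cyc M = M -> exists l, M = l *: F.

Let G := tens_act (transp i0) F.

Lemma gradeG : gradeT cyc' G = G.
Proof. by rewrite /G -(cyc_conj i0) -tens_act_gradeT gradeF. Qed.

Lemma G_line M : inR r M -> gradeT cyc' M = M -> exists l, M = l *: G.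
Proof.
move=> RM gradeM.
have [|l El] := F_line (inR_tens_act (transp i0) RM).
  by rewrite -(cyc'_conj i0) -tens_act_gradeT gradeM.
by exists l; rewrite -(tens_act_transpK i0 M) El tens_act_scale.
Qed.

Lemma scale_invol (A : 'M[CC]_3) (l l' : CC) : A != 0 -> l *: (l' *: A) = A -> l * l' = 1.
Proof.
move=> A0; rewrite scalerA => /eqP.
rewrite -subr_eq0 -{2}(scale1r A) -scalerBl scaler_eq0 (negbTE A0) orbF subr_eq0.
by move/eqP.
Qed.

Lemma tens_act_D m : exists l, l * l = 1 /\ tens_act (transp m) D = l *: D.
Proof.
have [|l El] := D_line (inR_tens_act (transp m) RD).
  by rewrite -[1%g](conj1g (transp m)) -tens_act_gradeT gradeD.
exists l; split => //; apply: (scale_invol D_neq0).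
by rewrite -El -tens_act_scale -El tens_act_transpK.
Qed.

Lemma tens_act_FG m : exists n n', [/\ n * n' = 1,
  tens_act (transp m) F = n *: G & tens_act (transp m) G = n' *: F].
Proof.
have [|n En] := G_line (inR_tens_act (transp m) RF).
  by rewrite -(cyc_conj m) -tens_act_gradeT gradeF.
have [|n' En'] := F_line (inR_tens_act (transp m) (inR_tens_act (transp i0) RF)).
  by rewrite -(cyc'_conj m) -tens_act_gradeT gradeG.
exists n, n'; split => //; apply: (scale_invol F_neq0).
by rewrite -En' -tens_act_scale -En tens_act_transpK.
Qed.

Lemma D_entry i j : D i j = (i == j)%:R * D i i.
Proof. by rewrite -{1}gradeD mxE transp_mul_eq1; case: eqVneq => [->|]; rewrite ?mul0r. Qed.

Lemma F_entry i j : F i j = (j == i + 1)%:R * F i (i + 1).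
Proof. by rewrite -{1}gradeF mxE transp_mul_cyc; case: eqVneq => [->|]; rewrite ?mul0r. Qed.

Lemma G_entry i j : G i j = (i == j + 1)%:R * G (j + 1) j.
Proof. by rewrite -{1}gradeG mxE transp_mul_cyc'; case: eqVneq => [->|]; rewrite ?mul0r. Qed.

Lemma D_diag_neq0 k : D k k != 0.
Proof.
have [k0 Dk0] : exists k0, D k0 k0 != 0.
  case: (pickP (fun k => D k k != 0)) => [k0 Dk0|diag0]; first by exists k0.
  move: D_neq0; suff -> : D = 0 by rewrite eqxx.
  by apply/matrixP => i j; rewrite D_entry (eqP (negbFE (diag0 i))) mxE mulr0.
have [m <-] := conj_idx_onto k0 k; have [l [_ El]] := tens_act_D m.
apply: contra Dk0 => /eqP Dk; have := tens_act_entry m D k0 k0.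
rewrite El mxE Dk mulr0 => /esym/eqP; rewrite !mulf_eq0 !(negbTE (gam_neq0 _ _)).
by rewrite orbF.
Qed.

Lemma FG_neq0 k : F k (k + 1) != 0 /\ G (k + 1) k != 0.
Proof.
have gamF m a b : F a b != 0 -> G (- (m + a)) (- (m + b)) != 0.
  have [n [n' [_ En _]]] := tens_act_FG m.
  apply: contra => /eqP Gab; have := tens_act_entry m F a b.
  rewrite En mxE Gab mulr0 => /esym/eqP; rewrite !mulf_eq0 !(negbTE (gam_neq0 _ _)).
  by rewrite orbF.
have gamG m a b : G a b != 0 -> F (- (m + a)) (- (m + b)) != 0.
  have [n [n' [_ _ En']]] := tens_act_FG m.
  apply: contra => /eqP Fab; have := tens_act_entry m G a b.
  rewrite En' mxE Fab mulr0 => /esym/eqP; rewrite !mulf_eq0 !(negbTE (gam_neq0 _ _)).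
  by rewrite orbF.
have shift (m a : 'I_3) : - (m + a) = - (m + (a + 1)) + 1 by rewrite addrA (opprD (m + a)) subrK.
have [k0 Fk0] : exists k0, F k0 (k0 + 1) != 0.
  case: (pickP (fun k => F k (k + 1) != 0)) => [k0 Fk0|F0]; first by exists k0.
  move: F_neq0; suff -> : F = 0 by rewrite eqxx.
  by apply/matrixP => i j; rewrite F_entry (eqP (negbFE (F0 i))) mxE mulr0.
have G_neq0 j : G (j + 1) j != 0.
  have [m Em] := conj_idx_onto (k0 + 1) j.
  by move: (gamF m _ _ Fk0); rewrite (shift m k0) Em.
split; last exact: G_neq0.
have [m Em] := conj_idx_onto (k + 1) k.
by move: (gamG m _ _ (G_neq0 k)); rewrite (shift m k) Em.
Qed.

Lemma FGD_balanced k :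
  F k (k + 1) * G (k + 1) k * D (k - 1) (k - 1) =
  F (k + 1) (k + 1 + 1) * G (k + 1 + 1) (k + 1) * D k k.
Proof.
have [Ea Eb E2] : [/\ - (k + 1 + k) = k - 1, - (k + 1 + (k + 1)) = k + 1
                     & k + 1 + 1 = k - 1].
  by split; apply: val_inj; ordcase k.
have [l [ll El]] := tens_act_D (k + 1).
have [n [n' [nn En En']]] := tens_act_FG (k + 1).
have rel_D a : gam (k + 1) a * D a a * gam (k + 1) a = l * D (- (k + 1 + a)) (- (k + 1 + a)).
  by rewrite -tens_act_entry El mxE.
have rel_F : gam (k + 1) k * F k (k + 1) * gam (k + 1) (k + 1) = n * G (k - 1) (k + 1).
  by rewrite -tens_act_entry En mxE Ea Eb.
have rel_G : gam (k + 1) (k + 1) * G (k + 1) k * gam (k + 1) k = n' * F (k + 1) (k - 1).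
  by rewrite -tens_act_entry En' mxE Ea Eb.
have := transport_ratio (rel_D k) (rel_D (k + 1)) rel_F rel_G ll nn.
rewrite Ea Eb => ratio; rewrite E2.
by apply: (mulIf (D_diag_neq0 (k + 1))); rewrite ratio; ring.
Qed.

Lemma line_case_rank_one : rank_one_relation r.
Proof.
have [al [be [u [w [u0 w0 uw]]]]] := rank_one_combination (d := fun k => D k k)
  (f := fun k => F k (k + 1)) (g := fun k => G (k + 1) k)
  D_diag_neq0 (fun k => (FG_neq0 k).1) (fun k => (FG_neq0 k).2) FGD_balanced.
exists u, w; split => //.
have RG : inR r G by apply: inR_tens_act.
suff -> : u^T *m w = D + al *: F + be *: G.
  by apply: inR_add; [apply: inR_add => //|]; apply: inR_scale.
apply/matrixP => i j; rewrite [LHS]mxE big_ord1 [_^T _ _]mxE uw.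
rewrite [RHS]mxE [(D + _) i j]mxE [(al *: F) i j]mxE [(be *: G) i j]mxE.
by rewrite [D i j]D_entry [F i j]F_entry [G i j]G_entry.
Qed.

End LineCase.

Lemma rank_one_relation_adapted : rank_one_relation r.
Proof.
have [Ae gradeAe] := coord_mx (inR_gradeT 1) (gradeT_sum 1).
have [Ac gradeAc] := coord_mx (inR_gradeT cyc) (gradeT_sum cyc).
have [Ac' gradeAc'] := coord_mx (inR_gradeT cyc') (gradeT_sum cyc').
have [As actAs] := coord_mx (@inR_tens_act (transp i0)) (@tens_act_sum (transp i0)).
have AeAe := coord_mx_idem r_indep gradeAe (gradeT_id 1).
have AcAc := coord_mx_idem r_indep gradeAc (gradeT_id cyc).
have split1 : Ae + Ac + Ac' = 1.
  apply: (comb_mx_inj r_indep) => a.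
  by rewrite mulmx1 !mulmxDr !combD -gradeAe -gradeAc -gradeAc' gradeT_split.
have AsAs : As *m As = 1.
  apply: (comb_mx_inj r_indep) => a.
  by rewrite mulmxA -(actAs (a *m As)) -(actAs a) tens_act_transpK mulmx1.
have AcAs : Ac *m As = As *m Ac'.
  apply: (comb_mx_inj r_indep) => a; rewrite !mulmxA.
  by rewrite -(actAs (a *m Ac)) -gradeAc -(gradeAc' (a *m As)) -actAs tens_act_gradeT cyc_conj.
have tr_Ac' : \tr Ac' = \tr Ac.
  have -> : Ac' = As *m (Ac *m As) by rewrite AcAs mulmxA AsAs mul1mx.
  by rewrite mxtrace_mulC -mulmxA AsAs mulmx1.
(* the trace of 1 = Ae + Ac + Ac' counts dim R = 3 *)
have rank_sum : (\rank Ae + \rank Ac + \rank Ac = 3)%N.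
  apply/eqP; rewrite -(eqr_nat CC) !natrD -!mxtrace_idem // -{2}tr_Ac'.
  by rewrite -!mxtraceD split1 mxtrace1.
have [] : ((\rank Ae = 3 /\ \rank Ac = 0) \/ (\rank Ae = 1 /\ \rank Ac = 1))%N by lia.
  by case=> rankAe _; apply: (rank_one_of_diagonal r_indep gradeAe) AeAe rankAe.
case=> rankAe rankAc.
have [D [RD gradeD D0 D_line]] := fixed_line r_indep gradeAe AeAe rankAe.
have [F [RF gradeF F0 F_line]] := fixed_line r_indep gradeAc AcAc rankAc.
exact: (line_case_rank_one RD gradeD D0 D_line RF gradeF F0 F_line).
Qed.

End AdaptedBasis.

Theorem mainTheorem18 (r : 'I_3 -> 'M[CC]_3) (rho P : S3 -> 'M[CC]_3) :
  lin_indep3 r ->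
  DS3_module rho P ->
  R_submodule r rho P ->
  inner_faithful r rho P ->
  ~ quad_domain r.
Proof.
move=> r_indep module R_sub faithful.
have P_transp := transp_grade_neq0 module (inner_faithful_odd_grade faithful).
have [Q [Q_unit QPQ_transp QPQ_even]] := grading_basis module P_transp.
have [u [w [u0 w0 Ruw]]] := rank_one_relation_adapted
  (lin_indep3_basechange Q_unit r_indep) (DS3_module_conj Q_unit module)
  (R_submodule_basechange Q_unit R_sub) QPQ_transp QPQ_even.
apply: rank_one_relation_not_domain; exists (u *m Q), (w *m Q); split.
- by apply: contra u0 => /eqP uQ0; rewrite -(mulmxK Q_unit u) uQ0 mul0mx.
- by apply: contra w0 => /eqP wQ0; rewrite -(mulmxK Q_unit w) wQ0 mul0mx.
- by move/(inR_basechange Q_unit): Ruw; rewrite /basechangeV trmx_mul !mulmxA.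
Qed.
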